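(* For all $t>0$ and all Borel $V:\mathbb{R}^d\to\mathbb{R}$, $$r_*(V,t/2)\le(4\pi)^{-d/2}\|N(V,t)\|_\infty\le 2\,r_*(V,t/2).$$
   Context: $g(t,x,y)=(4\pi t)^{-d/2}e^{-|y-x|^2/(4t)}$; for $\alpha\in\mathbb{R}^d$, $p_\alpha(t,x,y)=g(t,x-2\alpha t,y)$. $r_*(V,t)=\sup_{\alpha,x\in\mathbb{R}^d}\int_0^t\int_{\mathbb{R}^d}p_\alpha(s,x,z)|V(z)|\,dz\,ds$. $N(V,t,x,y)=\int_0^{t/2}\int_{\mathbb{R}^d}\tau^{-d/2}e^{-|z-y+(\tau/t)(y-x)|^2/(4\tau)}|V(z)|\,dz\,d\tau+\int_{t/2}^t\int_{\mathbb{R}^d}(t-\tau)^{-d/2}e^{-|z-y+(\tau/t)(y-x)|^2/(4(t-\tau))}|V(z)|\,dz\,d\tau$, and $\|N(V,t)\|_\infty=\sup_{x,y\in\mathbb{R}^d}N(V,t,x,y)$. *)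

(* R^d is modelled as d.-tuple R, which
   carries the product (= Borel) sigma-algebra from measurable_structure.v. *)
From mathcomp Require Import all_boot all_order all_algebra.
From mathcomp Require Import all_classical all_reals all_analysis.
Set Implicit Arguments. Unset Strict Implicit. Unset Printing Implicit Defensive.
Import Order.TTheory GRing.Theory Num.Theory.
Local Open Scope ring_scope.
Local Open Scope classical_set_scope.

Section Defs.
Variable R : realType.

Definition sqn (d : nat) (v : 'I_d -> R) : R := \sum_(i < d) (v i) ^+ 2.

(* Lebesgue integral over R^d of a nonnegative function, as the iterated
   one-dimensional Lebesgue integral (equal to the integral against
   d-dimensional Lebesgue measure for nonnegative Borel integrands, Tonelli). *)
Fixpoint lebint (d : nat) : (d.-tuple R -> \bar R) -> \bar R :=
  match d with
  | 0 => fun f => f [tuple]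
  | n.+1 => fun f =>
      (\int[@lebesgue_measure R]_x lebint (fun y : n.-tuple R => f [tuple of x :: y]))%E
  end.

Definition gauss (d : nat) (t : R) (x y : d.-tuple R) : R :=
  powR (4 * pi * t) (- (d%:R / 2)) *
  expR (- sqn (fun i => tnth y i - tnth x i) / (4 * t)).

Definition palpha (d : nat) (a : d.-tuple R) (t : R) (x y : d.-tuple R) : R :=
  gauss t (mktuple (fun i => tnth x i - 2 * tnth a i * t)) y.

Definition rstar (d : nat) (V : d.-tuple R -> R) (t : R) : \bar R :=
  ereal_sup [set r | exists a x : d.-tuple R, r =
    (\int[@lebesgue_measure R]_(s in `]0%R, t[)
       lebint (fun z => (palpha a s x z)%:E * (`|V z|)%:E))%E].

Definition Nker (d : nat) (s c : R) (x y z : d.-tuple R) : R :=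
  powR s (- (d%:R / 2)) *
  expR (- sqn (fun i => tnth z i - tnth y i + c * (tnth y i - tnth x i)) / (4 * s)).

Definition Nfun (d : nat) (V : d.-tuple R -> R) (t : R) (x y : d.-tuple R) : \bar R :=
  ((\int[@lebesgue_measure R]_(tau in `]0%R, (t / 2)%R[)
      lebint (fun z => (Nker tau (tau / t) x y z)%:E * (`|V z|)%:E))
   +
   (\int[@lebesgue_measure R]_(tau in `](t / 2)%R, t[)
      lebint (fun z => (Nker (t - tau) (tau / t) x y z)%:E * (`|V z|)%:E)))%E.

Definition Nsup (d : nat) (V : d.-tuple R -> R) (t : R) : \bar R :=
  ereal_sup [set r | exists x y : d.-tuple R, r = Nfun V t x y].

End Defs.

From HB Require Import structures.
From mathcomp Require Import all_boot all_order all_algebra.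
From mathcomp Require Import all_classical all_reals all_analysis.
From mathcomp Require Import ring lra.
Import Order.TTheory GRing.Theory Num.Theory.
Local Open Scope ring_scope.
Local Open Scope classical_set_scope.

(* Write K = (4 pi)^{d/2} and, for a drift a and a base point w,
     I(a,w) = int_0^{t/2} int p_a(s,w,z) |V(z)| dz ds,
   so that r_*(V,t/2) = sup_{a,w} I(a,w).  For fixed x, y the kernel of N is a
   multiple of a drifted heat kernel: on ]0,t/2[ it is K p_a(tau,y,.) with
   a = (y-x)/(2t), and on ]t/2,t[ it is K p_b(t-tau,x,.) with b = (x-y)/(2t);
   after the reflection s = t - tau of the second time integral this gives
     N(V,t,x,y) = K (I(a,y) + I(b,x))                     (Nfun_decomp).
   Bounding both terms by r_* yields the upper bound; conversely each I(a,w)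
   is the first term of N(V,t,w - 2at,w), which yields the lower bound.

   The inner space integrals are not known to be measurable in time, so the two
   facts about time integrals we use -- pulling out a positive constant and
   invariance under the reflection s |-> c - s -- are proved from the definition
   of the integral of a nonnegative function as a supremum over simple
   functions, without measurability assumptions. *)

Section integral_scale.
Local Open Scope ereal_scope.
Context d (T : measurableType d) (R : realType) (mu : {measure set T -> \bar R}).
Import HBNNSimple.

(* One inequality of pos_ge0_integralZl: a simple function below k f, scaled
   by k^-1, is a simple function below f. *)
Lemma pos_ge0_integralZl_le (D : set T) (f : T -> \bar R) (k : R) :
  (0 < k)%R -> (forall x, D x -> 0 <= f x) ->
  \int[mu]_(x in D) (k%:E * f x) <= k%:E * \int[mu]_(x in D) f x.
Proof.
move=> k0 f0.
have kf0 x : D x -> 0 <= k%:E * f x by move=> Dx; rewrite mule_ge0 ?f0// lee_fin ltW.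
rewrite ge0_integralE// (ge0_integralE _ f0).
apply: ge_ereal_sup => _ [h hle <-].
have ki0 : (0 <= k^-1)%R by rewrite invr_ge0 ltW.
pose hk := scale_nnsfun h ki0.
have -> : sintegral mu h = k%:E * sintegral mu hk.
  by rewrite sintegralrM muleA -EFinM divff ?gt_eqF ?mul1e.
rewrite lee_pmul2l ?lte_fin//; apply: ereal_sup_ubound; exists hk => // x.
have := hle x; rewrite erestrict_scale /hk /= EFinM => hx.
by rewrite -(@lee_pmul2l _ k%:E) ?lte_fin// muleA -!EFinM mulfV ?gt_eqF// mul1r.
Qed.

Lemma pos_ge0_integralZl (D : set T) (f : T -> \bar R) (k : R) :
  (0 < k)%R -> (forall x, D x -> 0 <= f x) ->
  \int[mu]_(x in D) (k%:E * f x) = k%:E * \int[mu]_(x in D) f x.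
Proof.
move=> k0 f0; apply/eqP; rewrite eq_le pos_ge0_integralZl_le//=.
have kf0 x : D x -> 0 <= k%:E * f x by move=> Dx; rewrite mule_ge0 ?f0// lee_fin ltW.
have := @pos_ge0_integralZl_le D (fun x => k%:E * f x) k^-1.
rewrite invr_gt0 => /(_ k0 kf0).
under eq_integral do rewrite muleA -EFinM mulVf ?gt_eqF// mul1e.
move=> le_f; rewrite -(@lee_pmul2l _ k^-1%:E) ?lte_fin ?invr_gt0//.
by rewrite muleA -EFinM mulVf ?gt_eqF// mul1e.
Qed.

End integral_scale.

Section involution.
Local Open Scope ereal_scope.
Context d (T : measurableType d) (R : realType) (mu : {measure set T -> \bar R}).
Variable psi : T -> T.
Hypothesis mpsi : measurable_fun setT psi.
Hypothesis psiK : involutive psi.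
Hypothesis mu_psi : forall {A}, measurable A -> mu (psi @^-1` A) = mu A.

Section comp_nnsfun.
Import HBNNSimple.
Variable h : {nnsfun T >-> R}.

Definition hpsi : T -> R := h \o psi.
Let measurable_hpsi : measurable_fun setT hpsi.
Proof. exact: measurableT_comp. Qed.
HB.instance Definition _ := isMeasurableFun.Build _ _ _ _ hpsi measurable_hpsi.
Let finite_range_hpsi : finite_set (range hpsi).
Proof. by apply: sub_finite_set (fimfunP h) => _ [x _ <-]; exists (psi x). Qed.
HB.instance Definition _ := FiniteImage.Build _ _ hpsi finite_range_hpsi.
Let hpsi_ge0 x : (0 <= hpsi x)%R. Proof. exact: fun_ge0. Qed.
HB.instance Definition _ := isNonNegFun.Build _ _ hpsi hpsi_ge0.
Definition comp_nnsfun : {nnsfun T >-> R} := hpsi.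

Lemma sintegral_comp_nnsfun : sintegral mu comp_nnsfun = sintegral mu h.
Proof.
apply: eq_fsbigr => r _; congr (_ * _).
exact: (mu_psi (measurable_funPTI h (measurable_set1 r))).
Qed.
End comp_nnsfun.

Lemma ge0_integral_involution_le (D : set T) (F : T -> \bar R) :
  (forall x, 0 <= F x) ->
  \int[mu]_(x in D) F (psi x) <= \int[mu]_(x in psi @^-1` D) F x.
Proof.
move=> F0; rewrite ge0_integralE// [leRHS]ge0_integralE//.
apply: ge_ereal_sup => _ [h hle <-]; apply: ereal_sup_ubound.
exists (comp_nnsfun h); last exact: sintegral_comp_nnsfun.
by move=> s; have := hle (psi s); rewrite /= /patch psiK.
Qed.

Lemma ge0_integral_involution (D : set T) (F : T -> \bar R) :
  (forall x, 0 <= F x) ->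
  \int[mu]_(x in D) F (psi x) = \int[mu]_(x in psi @^-1` D) F x.
Proof.
move=> F0; apply/eqP; rewrite eq_le ge0_integral_involution_le//=.
have := @ge0_integral_involution_le (psi @^-1` D) (F \o psi) (fun x => F0 _).
have -> : psi @^-1` (psi @^-1` D) = D by apply/seteqP; split=> x /=; rewrite psiK.
by under eq_integral do rewrite /= psiK.
Qed.

End involution.

Section reflection.
Local Open Scope ereal_scope.
Context (R : realType) (c : R).
Let mu := @lebesgue_measure R.

Definition refl_about : measurableTypeR R -> measurableTypeR R := fun s => (c - s)%R.

Let measurable_refl_about : measurable_fun setT refl_about.
Proof. exact: measurable_realfun.measurable_funB. Qed.

Let refl_about_K : involutive refl_about.
Proof. by move=> s; rewrite /refl_about subKr. Qed.

Lemma refl_about_preimage_itv (a b : R) (ba bb : bool) :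
  refl_about @^-1` [set` Interval (BSide ba a) (BSide bb b)] =
  [set` Interval (BSide (~~ bb) (c - b)%R) (BSide (~~ ba) (c - a)%R)].
Proof.
apply/seteqP; split=> s /=; rewrite !in_itv /= /refl_about;
  by case: ba; case: bb => /= /andP[? ?]; apply/andP; split; lra.
Qed.

(* Lebesgue measure is invariant under reflection: both measures agree on
   half-open intervals. *)
Lemma lebesgue_measure_refl_about (A : set (measurableTypeR R)) : measurable A ->
  mu (refl_about @^-1` A) = mu A.
Proof.
move=> mA; change (pushforward mu refl_about A = mu A).
apply/esym/lebesgue_measure_unique => //=.
move=> _ [[a b]] _ <-.
rewrite /pushforward refl_about_preimage_itv/= !lebesgue_measure_itv/=.
rewrite !lte_fin -!EFinD ltrD2l ltrN2.
by congr (if _ then _ else _); congr EFin; lra.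
Qed.

Lemma ge0_integral_refl_about (F : R -> \bar R) (a b : R) :
  (forall s, 0 <= F s) ->
  \int[mu]_(s in `]a, b[) F (c - s)%R = \int[mu]_(s in `](c - b)%R, (c - a)%R[) F s.
Proof.
move=> F0; rewrite -[`](c - b)%R, (c - a)%R[](refl_about_preimage_itv a b false true).
exact: (@ge0_integral_involution _ _ _ mu _ measurable_refl_about refl_about_K
  lebesgue_measure_refl_about _ _ F0).
Qed.

End reflection.

Section iterated_integral.
Local Open Scope ereal_scope.
Context (R : realType).

Lemma lebint_ge0 (d : nat) (f : d.-tuple R -> \bar R) :
  (forall z, 0 <= f z) -> 0 <= lebint f.
Proof.
elim: d f => [|n IH] f f0 /=; first exact: f0.
by apply: integral_ge0 => x _; apply: IH.
Qed.

Lemma lebintZl (d : nat) (f : d.-tuple R -> \bar R) (k : R) :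
  (0 < k)%R -> (forall z, 0 <= f z) ->
  lebint (fun z => k%:E * f z) = k%:E * lebint f.
Proof.
move=> k0; elim: d f => [|n IH] f f0 //=.
under eq_integral do rewrite IH//.
by rewrite pos_ge0_integralZl// => x _; apply: lebint_ge0.
Qed.

End iterated_integral.

Section heat_kernel.
Context (R : realType) (d : nat).

Definition heatK : R := powR (4 * pi) (d%:R / 2).

Lemma heatK_gt0 : 0 < heatK.
Proof. by rewrite powR_gt0 // mulr_gt0 // pi_gt0. Qed.

Lemma palpha_ge0 (a w z : d.-tuple R) (s : R) : 0 <= palpha a s w z.
Proof. by rewrite /palpha /gauss mulr_ge0 ?powR_ge0 // expR_ge0. Qed.

Lemma Nker_palpha (s c : R) (a w x y z : d.-tuple R) : 0 < s ->
  (forall i, tnth w i - 2 * tnth a i * s = tnth y i - c * (tnth y i - tnth x i)) ->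
  Nker s c x y z = heatK * palpha a s w z.
Proof.
move=> s0 hw; rewrite /Nker /palpha /gauss.
have -> : sqn (fun i => tnth z i - tnth y i + c * (tnth y i - tnth x i)) =
    sqn (fun i => tnth z i - tnth (mktuple (fun i => tnth w i - 2 * tnth a i * s)) i).
  by apply: eq_bigr => i _; rewrite tnth_mktuple hw; congr (_ ^+ 2); ring.
have pi4_gt0 : 0 < 4 * pi :> R by rewrite mulr_gt0 // pi_gt0.
rewrite mulrA; congr (_ * _).
rewrite powRM ?ltW // /heatK mulrA !powRN mulfV ?mul1r //.
by rewrite gt_eqF // powR_gt0.
Qed.

End heat_kernel.

Section N_decomposition.
Local Open Scope ereal_scope.
Context (R : realType) (d : nat) (V : d.-tuple R -> R) (t : R).
Hypothesis t0 : (0 < t)%R.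
Let mu := @lebesgue_measure R.

Definition Pspace (a w : d.-tuple R) (s : R) : \bar R :=
  lebint (fun z => (palpha a s w z)%:E * (`|V z|)%:E).

Definition Ihalf (a w : d.-tuple R) : \bar R :=
  \int[mu]_(s in `]0%R, (t / 2)%R[) Pspace a w s.

(* The drift (y - x)/(2t), which moves x to y in time t. *)
Definition drift (x y : d.-tuple R) : d.-tuple R :=
  mktuple (fun i => (tnth y i - tnth x i) / (2 * t))%R.

Lemma Pspace_ge0 (a w : d.-tuple R) (s : R) : 0 <= Pspace a w s.
Proof. by apply: lebint_ge0 => z; rewrite mule_ge0 // lee_fin palpha_ge0. Qed.

Lemma Ihalf_ge0 (a w : d.-tuple R) : 0 <= Ihalf a w.
Proof. by apply: integral_ge0 => s _; apply: Pspace_ge0. Qed.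

Lemma Ihalf_le_rstar (a w : d.-tuple R) : Ihalf a w <= rstar V (t / 2).
Proof. by apply: ereal_sup_ubound; exists a, w. Qed.

Lemma lebint_Nker (s c : R) (a w x y : d.-tuple R) : (0 < s)%R ->
  (forall i, tnth w i - 2 * tnth a i * s = tnth y i - c * (tnth y i - tnth x i))%R ->
  lebint (fun z => (Nker s c x y z)%:E * (`|V z|)%:E) = (heatK R d)%:E * Pspace a w s.
Proof.
move=> s0 hw; rewrite /Pspace -lebintZl ?heatK_gt0//; last first.
  by move=> z; rewrite mule_ge0 // lee_fin palpha_ge0.
congr lebint; apply: funext => z.
by rewrite (@Nker_palpha _ _ s c a w x y z s0 hw) EFinM muleA.
Qed.

Lemma Nfun_decomp (x y : d.-tuple R) :
  Nfun V t x y = (heatK R d)%:E * (Ihalf (drift x y) y + Ihalf (drift y x) x).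
Proof.
have first_half : \int[mu]_(tau in `]0%R, (t / 2)%R[)
    lebint (fun z => (Nker tau (tau / t) x y z)%:E * (`|V z|)%:E) =
    (heatK R d)%:E * Ihalf (drift x y) y.
  rewrite /Ihalf -pos_ge0_integralZl ?heatK_gt0//; last by move=> *; exact: Pspace_ge0.
  apply: eq_integral => tau; rewrite inE /= in_itv /= => /andP[tau0 _].
  apply: lebint_Nker => // i; rewrite tnth_mktuple; field.
  by rewrite gt_eqF.
have second_half : \int[mu]_(tau in `](t / 2)%R, t[)
    lebint (fun z => (Nker (t - tau) (tau / t) x y z)%:E * (`|V z|)%:E) =
    (heatK R d)%:E * Ihalf (drift y x) x.
  transitivity ((heatK R d)%:E *
      \int[mu]_(tau in `](t / 2)%R, t[) Pspace (drift y x) x (t - tau)%R).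
    rewrite -pos_ge0_integralZl ?heatK_gt0//; last by move=> *; exact: Pspace_ge0.
    apply: eq_integral => tau; rewrite inE /= in_itv /= => /andP[_ taut].
    apply: lebint_Nker; first by rewrite subr_gt0.
    move=> i; rewrite tnth_mktuple; field.
    by rewrite gt_eqF.
  rewrite ge0_integral_refl_about; last exact: Pspace_ge0.
  have half_t : (t - t / 2 = t / 2)%R by field.
  have -> : `](t - t)%R, (t - t / 2)%R[ = `]0%R, (t / 2)%R[ :> set R.
    by rewrite subrr half_t.
  by congr (_ * _).
by rewrite /Nfun first_half second_half (ge0_muleDr _ (Ihalf_ge0 _ _) (Ihalf_ge0 _ _)).
Qed.

(* Lower bound: I(a,w) is the first term of N(V,t,w - 2at, w). *)
Lemma Ihalf_le_Nsup (a w : d.-tuple R) : (heatK R d)%:E * Ihalf a w <= Nsup V t.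
Proof.
pose x := mktuple (fun i => tnth w i - 2 * tnth a i * t)%R.
have -> : a = drift x w.
  apply: eq_from_tnth => i; rewrite !tnth_mktuple; field.
  by rewrite gt_eqF.
apply: le_trans (ereal_sup_ubound _); last by exists x, w.
rewrite Nfun_decomp; apply: lee_wpmul2l; first by rewrite lee_fin ltW ?heatK_gt0.
exact: leeDl (Ihalf_ge0 _ _).
Qed.

Lemma Nsup_le_rstar : Nsup V t <= (heatK R d)%:E * (2%:E * rstar V (t / 2)).
Proof.
apply: ge_ereal_sup => _ [x [y ->]].
have -> : 2%:E * rstar V (t / 2) = rstar V (t / 2) + rstar V (t / 2).
  by rewrite mule_natl mule2n.
rewrite Nfun_decomp.
apply: lee_wpmul2l; first by rewrite lee_fin ltW ?heatK_gt0.
by apply: leeD; apply: Ihalf_le_rstar.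
Qed.

End N_decomposition.

Theorem lemma2p1 (R : realType) (d : nat) (t : R) (V : d.-tuple R -> R) :
  0 < t -> measurable_fun [set: d.-tuple R] V ->
  (rstar V (t / 2) <= (powR (4 * pi) (- (d%:R / 2)))%:E * Nsup V t)%E /\
  ((powR (4 * pi) (- (d%:R / 2)))%:E * Nsup V t <= 2%:E * rstar V (t / 2))%E.
Proof.
move=> t0 _; have K0 := heatK_gt0 R d.
rewrite powRN -/(heatK R d); split.
- apply: ge_ereal_sup => _ [a [w ->]].
  by rewrite (lee_pdivlMl _ _ K0); apply: Ihalf_le_Nsup.
- by rewrite (lee_pdivrMl _ _ K0); apply: Nsup_le_rstar.
Qed.
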